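(* Under the standing assumptions below, let $k\in\{0,\dots,n-1\}$ and $I(x_{k+1})=\{c_1,\dots,c_m\}$ with $c_1\prec\dots\prec c_m$. For every $j\le m$ and every $a:\mathrm{var}(c_j)\setminus X_k\to D$ such that all denominators below are nonzero, $$\prod_{i=1}^{j}\frac{w(I_k(c_i),a)}{w(I_k(c_i)\setminus\{c_i\},a)}=\frac{w(I_{k+1}(c_j),a)}{w(I_{k+1}(c_j)\setminus\{c_1,\dots,c_j\},a)}.$$
   Context: Standing assumptions: $I$ is a finite set of weighted constraints with default values on a finite domain $D$ (a constraint $c$ on variables $\mathrm{var}(c)$ is a pair $(f,\delta)$, $f:S\to\mathbb Q_{\ge0}$, $S\subseteq D^{\mathrm{var}(c)}$, $\delta\in\mathbb Q_{\ge0}$, inducing $c(a)=f(a)$ on $S$ and $\delta$ elsewhere) such that distinct constraints have distinct variable sets, $\mathcal H(I)=(\mathrm{var}(I),\{\mathrm{var}(c)\mid c\in I\})$ is $\beta$-acyclic, and $(x_1,\dots,x_n)$ is a $\beta$-elimination order of $\mathcal H(I)$ (an enumeration of $\mathrm{var}(I)$ such that for each $k$, $x_{k+1}$ is a nest point—the edges containing it are totally ordered by inclusion—of the hypergraph with vertices $\mathrm{var}(I)\setminus X_k$ and edges $\{e\setminus X_k\}\setminus\{\emptyset\}$). $X_k=\{x_1,\dots,x_k\}$. For $c,d\in I$: $c\prec d$ iff there is $k$ with $\mathrm{var}(c)\setminus X_k\subsetneq\mathrm{var}(d)\setminus X_k$; $c\preceq d$ iff $c\prec d$ or $c=d$. $\prec_0=\emptyset$;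 $c\prec_{k+1}d$ iff $c\prec_k d$ or there is $e\in I$ with $c\preceq_k e\prec d$ and $x_{k+1}\in\mathrm{var}(d)\cap\mathrm{var}(e)$; $c\preceq_k d$ iff $c=d$ or $c\prec_k d$. $I_k(c)=\{d\in I\mid d\preceq_k c\}$; $I(x)=\{c\in I\mid x\in\mathrm{var}(c)\}$. For $J\subseteq I$ and $a\in D^W$: $w(J,a)=\sum_{b\in D^{\mathrm{var}(J)},\,b\text{ agrees with }a\text{ on }W\cap\mathrm{var}(J)}\prod_{c\in J}c(b|_{\mathrm{var}(c)})$, with $w(\emptyset,a)=1$. *)

From HB Require Import structures.
From mathcomp Require Import all_boot all_order all_algebra.
Set Implicit Arguments. Unset Strict Implicit. Unset Printing Implicit Defensive.
Import Order.TTheory GRing.Theory Num.Theory.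
Local Open Scope ring_scope.

(* A weighted constraint with default value: scope var(c), support S ⊆ D^{var(c)},
   f : S -> Q (only its values on S matter), default value delta. *)
Record constraint (V D : finType) := Constraint {
  scope : {set V};
  supp : {set {ffun {x : V | x \in scope} -> D}};
  fval : {ffun {ffun {x : V | x \in scope} -> D} -> rat};
  dflt : rat }.

Definition wf_constraint (V D : finType) (c : constraint V D) : Prop :=
  (forall r, r \in supp c -> 0 <= fval c r) /\ 0 <= dflt c.

Definition restrict (V D : finType) (c : constraint V D) (b : {ffun V -> D})
  : {ffun {x : V | x \in scope c} -> D} :=
  [ffun y => b (val y)].

Definition ceval (V D : finType) (c : constraint V D) (b : {ffun V -> D}) : rat :=
  let r := restrict c b in if r \in supp c then fval c r else dflt c.

Definition varJ (V D K : finType) (C : K -> constraint V D) (J : {set K}) : {set V} :=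
  \bigcup_(c in J) scope (C c).

(* w(J, a) for an assignment a on W (a is given as a total function; only its
   values on W are relevant).  The sum over b : D^{var(J)} agreeing with a on
   W ∩ var(J) is encoded as a sum over total assignments b that coincide with a
   outside var(J) \ W. *)
Definition w (V D K : finType) (C : K -> constraint V D) (J : {set K})
  (W : {set V}) (a : {ffun V -> D}) : rat :=
  \sum_(b : {ffun V -> D} | [forall x, (x \notin varJ C J :\: W) ==> (b x == a x)])
     \prod_(c in J) ceval (C c) b.

Definition Xk (V : finType) (xs : seq V) (k : nat) : {set V} := [set x in take k xs].

(* xat xs k A  <=>  x_{k+1} \in A  (false if k >= n) *)
Definition xat (V : finType) (xs : seq V) (k : nat) (A : {set V}) : bool :=
  if drop k xs is x :: _ then x \in A else false.

Definition is_beta_elim_order (V D K : finType) (C : K -> constraint V D) (xs : seq V) : Prop :=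
  [/\ uniq xs,
      [set x in xs] = \bigcup_(c : K) scope (C c)
    & forall k, (k < size xs)%N -> forall c d : K,
        xat xs k (scope (C c)) -> xat xs k (scope (C d)) ->
        (scope (C c) :\: Xk xs k \subset scope (C d) :\: Xk xs k)
        || (scope (C d) :\: Xk xs k \subset scope (C c) :\: Xk xs k)].

Definition prec (V D K : finType) (C : K -> constraint V D) (xs : seq V) (c d : K) : bool :=
  [exists k : 'I_(size xs).+1,
     (scope (C c) :\: Xk xs k) \proper (scope (C d) :\: Xk xs k)].

Fixpoint preck (V D K : finType) (C : K -> constraint V D) (xs : seq V) (k : nat) (c d : K)
  : bool :=
  if k is k'.+1 then
    preck C xs k' c d ||
    [exists e : K, [&& (c == e) || preck C xs k' c e, prec C xs e d,
                       xat xs k' (scope (C d)) & xat xs k' (scope (C e))]]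
  else false.

Definition preceqk (V D K : finType) (C : K -> constraint V D) (xs : seq V) (k : nat) (c d : K)
  : bool := (c == d) || preck C xs k c d.

Definition Ik (V D K : finType) (C : K -> constraint V D) (xs : seq V) (k : nat) (c : K)
  : {set K} := [set d | preceqk C xs k d c].

From HB Require Import structures.
From mathcomp Require Import all_boot all_order all_algebra.
From mathcomp Require Import ring.
Import Order.TTheory GRing.Theory Num.Theory.
Local Open Scope ring_scope.

(* For fixed k the sets I_k(c) form a laminar family: any two are nested, or
   disjoint and sharing only variables outside X_k.  This follows by induction on
   k, because the constraints containing x_{k+1} are totally ordered by ≺ (their
   scopes are nested modulo X_k, and distinct scopes are told apart at some
   earlier stage).  Moreover I_{k+1}(c_j) is the union of I_k(c_1), ..., I_k(c_j).
   Since w is multiplicative over families of constraints that only share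
   variables of W, adding I_k(c_i) to the union multiplies the numerator
   w(I_{k+1}) by w(I_k(c_i)) and the denominator by w(I_k(c_i) \ {c_i}), up to a
   common factor; the product therefore telescopes. *)

Set Implicit Arguments.
Unset Strict Implicit.
Unset Printing Implicit Defensive.

Lemma sub_take (T : eqType) (s : seq T) n m : (n <= m)%N -> {subset take n s <= take m s}.
Proof. by move=> lenm x; rewrite -(take_takel s lenm) => /mem_take. Qed.

Section Weights.
Variables (V D K : finType) (C : K -> constraint V D).
Local Notation sc c := (scope (C c)).
Implicit Types (J : {set K}) (F W : {set V}) (a b : {ffun V -> D}).

Definition agree_outside F a b := [forall x, (x \notin F) ==> (b x == a x)].

Definition merge F (b1 b2 : {ffun V -> D}) := [ffun x => if x \in F then b1 x else b2 x].

Lemma agree_outsideP F a b : reflect (forall x, x \notin F -> b x = a x) (agree_outside F a b).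
Proof.
apply: (iffP forallP) => [H x xF|H x]; first exact/eqP/(implyP (H x)).
by apply/implyP=> xF; rewrite H.
Qed.

Lemma ceval_ext c b b' : {in sc c, b =1 b'} -> ceval (C c) b = ceval (C c) b'.
Proof.
by move=> eqb; rewrite /ceval /restrict (_ : [ffun y => b (val y)] = [ffun y => b' (val y)]) //;
  apply/ffunP=> y; rewrite !ffunE eqb // (valP y).
Qed.

Lemma big_agree_setU (R : nmodType) F1 F2 a (G : {ffun V -> D} -> R) :
  [disjoint F1 & F2] ->
  \sum_(b | agree_outside (F1 :|: F2) a b) G b =
  \sum_(b1 | agree_outside F1 a b1) \sum_(b2 | agree_outside F2 a b2) G (merge F1 b1 b2).
Proof.
move=> dF; rewrite pair_big /=.
rewrite (reindex_onto (fun p => merge F1 p.1 p.2) (fun b => (merge F1 b a, merge F2 b a))) /=.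
  apply: eq_bigl => -[b1 b2] /=; apply/andP/andP => [[_ /eqP[<- <-]]|].
    by split; apply/agree_outsideP=> x xF; rewrite ffunE (negbTE xF).
  move=> [/agree_outsideP ab1 /agree_outsideP ab2]; split.
    by apply/agree_outsideP=> x; rewrite inE negb_or ffunE => /andP[/negbTE-> /ab2].
  apply/eqP; congr pair; apply/ffunP=> x; rewrite !ffunE.
    by case: (boolP (x \in F1)) => // /ab1 ->.
  case: (boolP (x \in F2)) => [xF2|/ab2 ->//].
  by rewrite (disjointFl dF xF2).
move=> b /agree_outsideP ab; apply/ffunP=> x; rewrite !ffunE /=.
case: (boolP (x \in F1)) => // xF1; case: (boolP (x \in F2)) => // xF2.
by rewrite ab // !inE negb_or xF1 xF2.
Qed.

Definition separated W J1 J2 :=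
  forall f g, f \in J1 -> g \in J2 -> f != g /\ sc f :&: sc g \subset W.

Lemma separated_sym W J1 J2 : separated W J1 J2 -> separated W J2 J1.
Proof. by move=> sep f g fJ gJ; case: (sep g f gJ fJ); rewrite eq_sym setIC. Qed.

Lemma separatedS W J1 J2 J1' J2' :
  J1' \subset J1 -> J2' \subset J2 -> separated W J1 J2 -> separated W J1' J2'.
Proof. by move=> /subsetP s1 /subsetP s2 sep f g /s1 fJ /s2 gJ; apply: sep. Qed.

Definition nested_or_separated W J1 J2 :=
  [\/ J1 \subset J2, J2 \subset J1 | separated W J1 J2].

Lemma nested_or_separated_sym W J1 J2 :
  nested_or_separated W J1 J2 -> nested_or_separated W J2 J1.
Proof. by case=> [?|?|/separated_sym ?]; [apply: Or32|apply: Or31|apply: Or33]. Qed.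

Lemma separated_weaken W W' J1 J2 :
  {in J1, forall f, sc f :&: W \subset W'} -> separated W J1 J2 -> separated W' J1 J2.
Proof.
move=> sJ1 sep f g fJ gJ; case: (sep f g fJ gJ) => fg sW; split=> //.
by rewrite -(setIidPl sW) setIAC (subset_trans (subsetIl _ _) (sJ1 f fJ)).
Qed.

Lemma w_setU J1 J2 W a :
  separated W J1 J2 -> w C (J1 :|: J2) W a = w C J1 W a * w C J2 W a.
Proof.
move=> sep; have dJ : [disjoint J1 & J2].
  by apply/pred0P=> f /=; apply/negP=> /andP[fJ1 fJ2]; case: (sep f f fJ1 fJ2); rewrite eqxx.
have dF : [disjoint varJ C J1 :\: W & varJ C J2 :\: W].
  apply/pred0P=> x /=; apply/negP; rewrite !inE => /andP[/andP[xW /bigcupP[f fJ xf]]].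
  move=> /andP[_ /bigcupP[g gJ xg]]; case: (sep f g fJ gJ) => _ /subsetP/(_ x).
  by rewrite inE xf xg (negbTE xW) => /(_ isT).
rewrite /w /varJ bigcup_setU setDUl big_agree_setU // big_distrlr /=.
apply: eq_bigr => b1 /agree_outsideP ab1; apply: eq_bigr => b2 /agree_outsideP ab2.
rewrite (eq_bigl [predU J1 & J2]) => [|c]; last by rewrite !inE.
rewrite bigU //=; congr (_ * _); apply: eq_bigr => c cJ; apply: ceval_ext => x xc;
  rewrite ffunE; case: (boolP (x \in _)) => // xF1.
- have xW : x \in W.
    by apply: contraR xF1 => xW; rewrite inE xW; apply/bigcupP; exists c.
  by rewrite ab1 // ab2 // inE xW.
- have xF2 : x \in varJ C J2 :\: W.
    by move: xF1; rewrite !inE => /andP[-> _]; apply/bigcupP; exists c.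
  by rewrite (disjointFl dF xF2) in xF1.
Qed.

(* Splitting J along T into A = J :&: T and B = J :\: T, all weights factor over
   R = T :\: (c |: J), A and B, and w(R) is common to both sides. *)
Lemma w_telescope_step (J S T : {set K}) c W a (p q : rat) :
  S \subset J -> c \notin J -> c \in T ->
  separated W T (J :\: T) -> separated W (T :\: (c |: J)) (J :&: T) ->
  p * w C (J :\: S) W a = q * w C J W a ->
  p * w C T W a * w C ((T :|: J) :\: (c |: S)) W a =
  q * w C (T :\ c) W a * w C (T :|: J) W a.
Proof.
move=> /subsetP sSJ cJ cT sepTB sepRA IH; have cS : c \notin S := contra (sSJ c) cJ.
set A := J :&: T; set B := J :\: T; set R := T :\: (c |: J).
have sepAB : separated W A B by apply: separatedS sepTB; first exact: subsetIr.
have wJ : w C J W a = w C A W a * w C B W a by rewrite -w_setU // setID.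
have wJS : w C (J :\: S) W a = w C (A :\: S) W a * w C (B :\: S) W a.
  rewrite -w_setU -?setDUl ?setID //.
  by apply: separatedS sepAB; apply: subsetDl.
have wTJ : w C (T :|: J) W a = w C T W a * w C B W a.
  rewrite -w_setU //; congr (w C _ W a); apply/setP=> f; rewrite /B !inE.
  by case: (f \in T); case: (f \in J).
have wTJS : w C ((T :|: J) :\: (c |: S)) W a =
            w C R W a * w C (A :\: S) W a * w C (B :\: S) W a.
  rewrite -!w_setU.
  - congr (w C _ W a); apply/setP=> f; rewrite /R /A /B !inE.
    have [->|_] := eqVneq f c; first by rewrite (negbTE cJ) (negbTE cS) cT.
    case fS: (f \in S); rewrite ?(sSJ f fS) //=.
    by case: (f \in T); case: (f \in J).
  - apply: separatedS sepTB; last exact: subsetDl.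
    by rewrite subUset subsetDl (subset_trans (subsetDl _ _) (subsetIr _ _)).
  - by apply: separatedS sepRA; rewrite ?subsetDl.
have wTc : w C (T :\ c) W a = w C R W a * w C A W a.
  rewrite -w_setU //; congr (w C _ W a); apply/setP=> f; rewrite /R /A !inE.
  have [->|_] := eqVneq f c; first by rewrite (negbTE cJ).
  by case: (f \in T); case: (f \in J).
rewrite wTJS wTc wTJ; rewrite wJS wJ in IH.
transitivity (w C T W a * w C R W a * (p * (w C (A :\: S) W a * w C (B :\: S) W a))).
  by ring.
by rewrite IH; ring.
Qed.

End Weights.

Section EliminationOrder.
Variables (V D K : finType) (C : K -> constraint V D) (xs : seq V) (y0 : V).
Hypothesis xs_uniq : uniq xs.
Hypothesis scope_inj : injective (fun c => scope (C c)).
Hypothesis nested : forall l, (l < size xs)%N -> forall c d : K,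
  xat xs l (scope (C c)) -> xat xs l (scope (C d)) ->
  (scope (C c) :\: Xk xs l \subset scope (C d) :\: Xk xs l)
  || (scope (C d) :\: Xk xs l \subset scope (C c) :\: Xk xs l).
Local Notation sc c := (scope (C c)).
Local Notation X := (Xk xs).
Local Notation xv l := (nth y0 xs l).
Local Notation prec := (prec C xs).
Local Notation preceqk := (preceqk C xs).
Local Notation Ik := (Ik C xs).
Implicit Types (A B : {set V}) (c d e : K).

Lemma xatE l A : xat xs l A = (l < size xs)%N && (xv l \in A).
Proof.
rewrite /xat; case: ltnP => [ltl|/drop_oversize-> //].
by rewrite (drop_nth y0 ltl).
Qed.

Lemma Xk0 : X 0 = set0.
Proof. by apply/setP=> x; rewrite !inE take0. Qed.

Lemma XkS l : (l < size xs)%N -> X l.+1 = xv l |: X l.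
Proof. by move=> ltl; apply/setP=> x; rewrite !inE (take_nth y0 ltl) mem_rcons in_cons. Qed.

Lemma xv_notin_Xk l : (l < size xs)%N -> xv l \notin X l.
Proof. by move=> ltl; rewrite inE in_take_leq ?(ltnW ltl) // index_uniq ?ltnn. Qed.

Lemma Xk_subset l l' : (l <= l')%N -> X l \subset X l'.
Proof.
by move=> lel; apply/subsetP=> x; rewrite !inE -(take_takel xs lel) => /mem_take.
Qed.

Lemma setD_Xk_subset A B l l' : (l <= l')%N ->
  A :\: X l \subset B :\: X l -> A :\: X l' \subset B :\: X l'.
Proof.
move=> /Xk_subset sXl sAB.
by rewrite -(setUidPr sXl) -!setDDl; apply: setSD.
Qed.

Lemma precP c d :
  reflect (exists2 l, (l <= size xs)%N & sc c :\: X l \proper sc d :\: X l) (prec c d).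
Proof.
apply: (iffP existsP) => [[l pcd]|[l lel pcd]]; first by exists l; rewrite // -ltnS.
by exists (Ordinal (lel : (l < (size xs).+1)%N)).
Qed.

Lemma prec_asym c d : prec c d -> ~~ prec d c.
Proof.
move=> /precP[l1 _ p1]; apply/negP=> /precP[l2 _ p2].
have [le12|/ltnW le21] := leqP l1 l2.
  by have := sub_proper_trans (setD_Xk_subset le12 (proper_sub p1)) p2; rewrite properxx.
by have := sub_proper_trans (setD_Xk_subset le21 (proper_sub p2)) p1; rewrite properxx.
Qed.

Lemma prec_irr c : ~~ prec c c.
Proof. by apply/negP=> pcc; case/negP: (prec_asym pcc). Qed.

Lemma prec_trans : transitive prec.
Proof.
move=> d c e /precP[l1 le1 p1] /precP[l2 le2 p2]; apply/precP.
have [le12|/ltnW le21] := leqP l1 l2.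
  by exists l2 => //; exact: sub_proper_trans (setD_Xk_subset le12 (proper_sub p1)) p2.
by exists l1 => //; exact: proper_sub_trans p1 (setD_Xk_subset le21 (proper_sub p2)).
Qed.

Lemma setD_XkS A l : (l < size xs)%N -> A :\: X l = A :\: X l.+1 :|: A :&: [set xv l].
Proof.
move=> ltl; apply/setP=> x; rewrite (XkS ltl) !inE.
have [->|_] := eqVneq x (xv l); last by rewrite /= andbF orbF.
by move: (xv_notin_Xk ltl); rewrite inE => ->; rewrite /= andbT.
Qed.

Lemma setD_XkS_comparable A B l : (l < size xs)%N ->
  A :\: X l.+1 = B :\: X l.+1 ->
  (A :\: X l \subset B :\: X l) || (B :\: X l \subset A :\: X l).
Proof.
move=> ltl eqAB; rewrite !(setD_XkS _ ltl) eqAB.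
have [vB|vB] := boolP (xv l \in B); apply/orP; [left|right]; apply: setUS;
  apply/subsetP=> x; rewrite !inE => /andP[xS /eqP xv].
  by rewrite xv vB eqxx.
by move: vB; rewrite -xv xS.
Qed.

Lemma eq_setD_Xk_of_not_prec c d l : (l <= size xs)%N -> ~~ prec c d -> ~~ prec d c ->
  (sc c :\: X l \subset sc d :\: X l) || (sc d :\: X l \subset sc c :\: X l) ->
  sc c :\: X l = sc d :\: X l.
Proof.
move=> lel ncd ndc /orP[scd|sdc]; apply/eqP; last rewrite eq_sym; rewrite eqEproper ?scd ?sdc.
  by apply: contra ncd => p; apply/precP; exists l.
by apply: contra ndc => p; apply/precP; exists l.
Qed.

Lemma nested_not_prec l c e : (l < size xs)%N -> xat xs l (sc e) -> xat xs l (sc c) ->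
  ~~ prec c e -> sc e :\: X l \subset sc c :\: X l.
Proof.
move=> ltl xe xc ncp; case/orP: (nested ltl xe xc) => // sce.
have/eqP-> // : sc c :\: X l == sc e :\: X l.
rewrite eqEproper sce; apply: contra ncp => p; apply/precP; exists l => //; exact: ltnW.
Qed.

(* If neither c ≺ d nor d ≺ c, the scopes coincide modulo X_m for every m <= l
   (descending induction on m), so c = d by injectivity of scopes. *)
Lemma prec_total l c d : (l < size xs)%N -> xat xs l (sc c) -> xat xs l (sc d) ->
  c != d -> prec c d || prec d c.
Proof.
move=> ltl xc xd; apply: contraR; rewrite negb_or => /andP[ncd ndc].
have eq_at m : (m <= l)%N ->
    (sc c :\: X m \subset sc d :\: X m) || (sc d :\: X m \subset sc c :\: X m) ->
    sc c :\: X m = sc d :\: X m.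
  by move=> lem; apply: eq_setD_Xk_of_not_prec => //; exact: leq_trans lem (ltnW ltl).
have eq_below i : (i <= l)%N -> sc c :\: X (l - i) = sc d :\: X (l - i).
  elim: i => [_|i IH lei]; first by rewrite subn0; apply: eq_at => //; exact: nested.
  apply: eq_at; first exact: leq_subr.
  apply: setD_XkS_comparable; first exact: leq_ltn_trans (leq_subr _ _) ltl.
  by rewrite subnSK //; apply: IH; exact: ltnW.
by have := eq_below l (leqnn l); rewrite subnn Xk0 !setD0 => /scope_inj->.
Qed.

Lemma preceqk0 c d : preceqk 0 c d = (c == d).
Proof. by rewrite /preceqk /= orbF. Qed.

Lemma preceqkS l c d : preceqk l.+1 c d = preceqk l c d ||
  [exists e, [&& preceqk l c e, prec e d, xat xs l (sc d) & xat xs l (sc e)]].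
Proof. by rewrite /preceqk /= orbA. Qed.

Lemma preceqk_prec l c d : preceqk l c d -> (c == d) || prec c d.
Proof.
elim: l c d => [|l IH] c d; first by rewrite preceqk0 => ->.
rewrite preceqkS => /orP[/IH //|/existsP[e /and4P[/IH ce ed _ _]]].
by case/orP: ce => [/eqP->|/prec_trans/(_ ed)->]; rewrite ?ed orbT.
Qed.

Lemma Ik_refl l c : c \in Ik l c.
Proof. by rewrite inE /preceqk eqxx. Qed.

Lemma scope_Ik l f c : (l <= size xs)%N -> f \in Ik l c -> sc f \subset sc c :|: X l.
Proof.
have sXS m A : A :|: X m \subset A :|: X m.+1 by apply/setUS/Xk_subset.
elim: l f c => [|l IH] f c lel; first by rewrite inE preceqk0 => /eqP->; apply: subsetUl.
rewrite inE preceqkS => /orP[fc|/existsP[e /and4P[fe ec xc xe]]].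
  by apply: subset_trans (sXS l _); apply: IH; rewrite ?inE // ltnW.
apply/subsetP=> x xf; have /subsetP/(_ x xf) : sc f \subset sc e :|: X l.
  by apply: IH; rewrite ?inE // ltnW.
have sX := subsetP (Xk_subset (leqnSn l)) x.
rewrite in_setU => /orP[xe'|/sX xX]; last by rewrite in_setU xX orbT.
have [/sX xX|xX] := boolP (x \in X l); first by rewrite in_setU xX orbT.
have /subsetP/(_ x) := nested_not_prec lel xe xc (prec_asym ec).
by rewrite !in_setD xX xe' => /(_ isT) /andP[_ xc']; rewrite in_setU xc'.
Qed.

Lemma Ik_xv l f c : (l < size xs)%N -> f \in Ik l c -> xv l \in sc f -> xv l \in sc c.
Proof.
move=> ltl /(scope_Ik (ltnW ltl)) /subsetP sf /sf.
by rewrite inE (negbTE (xv_notin_Xk ltl)) orbF.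
Qed.

Lemma IkS_notin l d : xv l \notin sc d -> Ik l.+1 d = Ik l d.
Proof.
move=> xd; apply/setP=> f; rewrite !inE preceqkS.
case: existsP => [[e /and4P[_ _ xd' _]]|]; last by rewrite orbF.
by move: xd'; rewrite xatE (negbTE xd) andbF.
Qed.

Lemma IkS l d : (l < size xs)%N -> xv l \in sc d ->
  Ik l.+1 d = \bigcup_(e | (xv l \in sc e) && ((e == d) || prec e d)) Ik l e.
Proof.
move=> ltl xd; apply/setP=> f; rewrite inE preceqkS; apply/idP/bigcupP.
  case/orP=> [fd|/existsP[e /and4P[fe ed _ xe]]].
    by exists d; rewrite ?xd ?eqxx ?inE.
  by exists e; rewrite ?inE // ed orbT andbT; move: xe; rewrite xatE => /andP[].
case=> e /andP[xe /orP[/eqP<-|ed]]; rewrite inE => fe; first by rewrite fe.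
by apply/orP; right; apply/existsP; exists e; rewrite fe ed !xatE ltl xd xe.
Qed.

Lemma IkS_subset l c d : (l < size xs)%N -> xv l \in sc c -> xv l \in sc d ->
  prec c d -> Ik l.+1 c \subset Ik l.+1 d.
Proof.
move=> ltl xc xd cd; rewrite (IkS ltl xc) (IkS ltl xd).
apply/bigcupsP=> e /andP[xe ec]; apply: bigcup_sup; rewrite xe /=.
by case/orP: ec => [/eqP->|/prec_trans/(_ cd)->]; rewrite ?cd orbT.
Qed.

Lemma separated_IkS l J d : (l < size xs)%N -> xv l \notin sc d ->
  separated C (~: X l) J (Ik l d) -> separated C (~: X l.+1) J (Ik l d).
Proof.
move=> ltl xd sep f g fJ gd; have [fg /subsetP sW] := sep f g fJ gd; split=> //.
apply/subsetP=> y yfg; have := sW y yfg; move: yfg; rewrite inE => /andP[_ yg].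
rewrite (XkS ltl) !in_setC in_setU1 negb_or => ->; rewrite andbT.
by apply: contraNneq xd => ey; apply: Ik_xv ltl gd _; rewrite -ey.
Qed.

Lemma IkS_nested_or_separated_mixed l c d : (l < size xs)%N ->
  (forall c d, nested_or_separated C (~: X l) (Ik l c) (Ik l d)) ->
  xv l \in sc c -> xv l \notin sc d ->
  nested_or_separated C (~: X l.+1) (Ik l.+1 c) (Ik l.+1 d).
Proof.
move=> ltl IH xc xd; rewrite (IkS_notin xd) (IkS ltl xc).
case: (boolP [exists e, [&& xv l \in sc e, (e == c) || prec e c & Ik l d \subset Ik l e]])
  => [/existsP[e /and3P[xe ec sde]]|none].
  by apply: Or32; apply: subset_trans sde _; apply: bigcup_sup; rewrite xe.
apply: Or33 => f g /bigcupP[e /andP[xe ec] fe] gd.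
case: (IH e d) => [/subsetP sed|sde|sep]; last exact: separated_IkS sep f g fe gd.
  by case/negP: xd; apply: Ik_xv ltl (sed e (Ik_refl l e)) xe.
by case/negP: none; apply/existsP; exists e; rewrite xe ec.
Qed.

Lemma Ik_nested_or_separated l c d : (l <= size xs)%N ->
  nested_or_separated C (~: X l) (Ik l c) (Ik l d).
Proof.
elim: l c d => [|l IH] c d lel.
  have [->|cd] := eqVneq c d; first by apply: Or31.
  apply: Or33 => f g; rewrite !inE !preceqk0 => /eqP-> /eqP->.
  by rewrite Xk0 setC0 subsetT.
have {}IH c' d' := IH c' d' (ltnW lel).
have [xc|xc] := boolP (xv l \in sc c); have [xd|xd] := boolP (xv l \in sc d).
- have [->|cd] := eqVneq c d; first by apply: Or31.
  have [xc' xd'] : xat xs l (sc c) /\ xat xs l (sc d) by rewrite !xatE lel xc xd.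
  by case/orP: (prec_total lel xc' xd' cd) => p; [apply: Or31|apply: Or32];
    apply: IkS_subset.
- exact: IkS_nested_or_separated_mixed.
- exact/nested_or_separated_sym/IkS_nested_or_separated_mixed.
rewrite !IkS_notin //; case: (IH c d) => [?|?|sep]; [apply: Or31|apply: Or32|apply: Or33] => //.
exact: separated_IkS.
Qed.

Section Telescope.
Variables (k : nat) (cs : seq K) (j : nat) (a : {ffun V -> D}) (c0 : K).
Hypothesis ltk : (k < size xs)%N.
Hypothesis cs_xat : forall c, (c \in cs) = xat xs k (sc c).
Hypothesis cs_pairwise : pairwise prec cs.
Hypothesis ltj : (j < size cs)%N.
Local Notation cj := (nth c0 cs j).
Local Notation W := (sc cj :\: X k).
Local Notation prefix n := [set e in take n cs].
Local Notation cover S := (\bigcup_(e in S) Ik k e).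

Lemma xv_in_cs e : e \in cs -> xv k \in sc e.
Proof. by rewrite cs_xat xatE ltk. Qed.

Lemma prec_nth e n : e \in cs -> (n < size cs)%N -> prec e (nth c0 cs n) = (e \in take n cs).
Proof.
move=> ecs ltn; rewrite in_take_leq ?(ltnW ltn) //.
have lte : (index e cs < size cs)%N by rewrite index_mem.
rewrite -{1}(nth_index c0 ecs); have /pairwiseP sorted_nth := cs_pairwise.
case: ltngtP => [ei|ie|->]; last exact/negbTE/prec_irr.
- by apply: sorted_nth; rewrite ?inE.
- by apply/negbTE/prec_asym; apply: sorted_nth; rewrite ?inE.
Qed.

Lemma scope_Ik_prefix e f : e \in take j.+1 cs -> f \in Ik k e -> sc f :&: ~: X k \subset W.
Proof.
move=> ej /(scope_Ik (ltnW ltk)) sfe; rewrite -setDE.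
apply: subset_trans (setSD _ sfe) _; rewrite setDUl setDv setU0.
move: ej; rewrite (take_nth c0 ltj) mem_rcons in_cons => /orP[/eqP->//|ej].
have ecs := mem_take ej.
apply: nested_not_prec ltk _ _ _; rewrite -?cs_xat ?mem_nth //.
by apply: prec_asym; rewrite prec_nth.
Qed.

Lemma separated_Ik_prefix e d : e \in take j.+1 cs ->
  separated C (~: X k) (Ik k e) (Ik k d) -> separated C W (Ik k e) (Ik k d).
Proof. by move=> ej; apply: separated_weaken => f; apply: scope_Ik_prefix. Qed.

Lemma nth_notin_cover n : (n < size cs)%N -> nth c0 cs n \notin cover (prefix n).
Proof.
move=> ltn; apply/bigcupP=> -[e]; rewrite !inE => en.
have pe : prec e (nth c0 cs n) by rewrite prec_nth ?(mem_take en).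
case/preceqk_prec/orP=> [/eqP ce|pe']; first by move: pe; rewrite ce (negbTE (prec_irr _)).
by move: (prec_asym pe); rewrite pe'.
Qed.

Lemma separated_cover_diff n : (n <= j)%N ->
  separated C W (Ik k (nth c0 cs n)) (cover (prefix n) :\: Ik k (nth c0 cs n)).
Proof.
move=> lenj f g fc /setDP[/bigcupP[e]]; rewrite inE => en ge gc.
have ltn := leq_ltn_trans lenj ltj.
case: (Ik_nested_or_separated e (nth c0 cs n) (ltnW ltk)) => [sec|sce|sep].
- by case/negP: gc; apply: (subsetP sec).
- case/negP: (nth_notin_cover ltn); apply/bigcupP; exists e; first by rewrite inE.
  exact: (subsetP sce) (Ik_refl _ _).
- apply: (separated_sym (separated_Ik_prefix _ sep)) fc ge.
  by apply: (sub_take (leq_trans lenj (leqnSn j))).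
Qed.

Lemma separated_cover_rest n : (n <= j)%N ->
  separated C W (Ik k (nth c0 cs n) :\: (nth c0 cs n |: cover (prefix n)))
                (cover (prefix n) :&: Ik k (nth c0 cs n)).
Proof.
move=> lenj d f /setDP[dc]; rewrite in_setU1 negb_or => /andP[dc' dJ].
case/setIP=> /bigcupP[e]; rewrite inE => en fe _.
have ltn := leq_ltn_trans lenj ltj.
case: (Ik_nested_or_separated d e (ltnW ltk)) => [sde|sed|sep].
- case/negP: dJ; apply/bigcupP; exists e; first by rewrite inE.
  exact: (subsetP sde) (Ik_refl k d).
- have dcs : d \in cs.
    rewrite cs_xat xatE ltk; apply: Ik_xv ltk (subsetP sed e (Ik_refl k e)) _.
    exact: xv_in_cs (mem_take en).
  case/negP: dJ; apply/bigcupP; exists d; last exact: Ik_refl.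
  rewrite inE -prec_nth //; move: dc; rewrite inE => /preceqk_prec.
  by rewrite (negbTE dc').
- apply: (separated_sym (separated_Ik_prefix _ (separated_sym sep))) (Ik_refl k d) fe.
  by apply: (sub_take (leq_trans lenj (leqnSn j))).
Qed.

Lemma cover_prefix_telescope n : (n <= j.+1)%N ->
  (\prod_(e <- take n cs) w C (Ik k e) W a) * w C (cover (prefix n) :\: prefix n) W a =
  (\prod_(e <- take n cs) w C (Ik k e :\ e) W a) * w C (cover (prefix n)) W a.
Proof.
elim: n => [_|n IH ltnj].
  have -> : prefix 0 = set0 by apply/setP=> e; rewrite !inE take0.
  by rewrite take0 !big_nil setD0.
have lenj : (n <= j)%N := ltnj.
have ltn := leq_ltn_trans lenj ltj.
have prefixS : prefix n.+1 = nth c0 cs n |: prefix n.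
  by apply/setP=> e; rewrite !inE (take_nth c0 ltn) mem_rcons in_cons.
rewrite (take_nth c0 ltn) !big_rcons -(take_nth c0 ltn) prefixS bigcup_setU big_set1.
apply: w_telescope_step; last exact: IH (ltnW ltnj).
- by apply/subsetP=> e en; apply/bigcupP; exists e; rewrite ?Ik_refl.
- exact: nth_notin_cover.
- exact: Ik_refl.
- exact: separated_cover_diff.
- exact: separated_cover_rest.
Qed.

Lemma cover_prefixS : Ik k.+1 cj = cover (prefix j.+1).
Proof.
rewrite (IkS ltk (xv_in_cs (mem_nth c0 ltj))); apply: eq_bigl => e.
rewrite inE (take_nth c0 ltj) mem_rcons in_cons.
have [->|_] := eqVneq e cj; first by rewrite xv_in_cs ?mem_nth.
have [xe|xe] := boolP (xv k \in sc e); first by rewrite prec_nth // cs_xat xatE ltk.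
by apply/esym/negbTE; apply: contra xe => /mem_take; apply: xv_in_cs.
Qed.

Lemma prod_Ik_ratio :
  (forall e, e \in take j.+1 cs -> w C (Ik k e :\ e) W a != 0) ->
  w C (Ik k.+1 cj :\: prefix j.+1) W a != 0 ->
  \prod_(e <- take j.+1 cs) (w C (Ik k e) W a / w C (Ik k e :\ e) W a) =
  w C (Ik k.+1 cj) W a / w C (Ik k.+1 cj :\: prefix j.+1) W a.
Proof.
rewrite cover_prefixS => nz_e nz_J; rewrite big_split /= prodfV.
apply/eqP; rewrite eqr_div ?prodf_seq_neq0 //; last exact/allP.
by rewrite cover_prefix_telescope // mulrC.
Qed.

End Telescope.

End EliminationOrder.

Theorem lemma8 (V D K : finType) (C : K -> constraint V D) (xs : seq V) :
  (forall c, wf_constraint (C c)) ->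
  injective (fun c => scope (C c)) ->
  is_beta_elim_order C xs ->
  forall k : nat, (k < size xs)%N ->
  forall cs : seq K,
    uniq cs ->
    [set c | xat xs k (scope (C c))] = [set c in cs] ->
    sorted (prec C xs) cs ->
  forall (j : 'I_(size cs)) (a : {ffun V -> D}),
    let cj := tnth (in_tuple cs) j in
    let W := scope (C cj) :\: Xk xs k in
    (forall c, c \in take j.+1 cs -> w C (Ik C xs k c :\ c) W a != 0) ->
    w C (Ik C xs k.+1 cj :\: [set c in take j.+1 cs]) W a != 0 ->
    \prod_(c <- take j.+1 cs) (w C (Ik C xs k c) W a / w C (Ik C xs k c :\ c) W a)
    = w C (Ik C xs k.+1 cj) W a / w C (Ik C xs k.+1 cj :\: [set c in take j.+1 cs]) W a.
Proof.
move=> _ scope_inj [xs_uniq _ nested] k ltk cs _ cs_set cs_sorted j a cj W; rewrite {}/W.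
have y0 : V by clear -ltk; case: xs ltk => // y.
have cs_xat c : (c \in cs) = xat xs k (scope (C c)).
  by move/setP/(_ c): cs_set; rewrite !inE.
have cs_pairwise : pairwise (prec C xs) cs by rewrite -sorted_pairwise //; exact: prec_trans.
have ->: cj = nth cj cs j by exact: tnth_nth.
exact: (prod_Ik_ratio y0 xs_uniq scope_inj nested ltk cs_xat cs_pairwise (ltn_ord j)).
Qed.
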